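(* Let $R=\nabla\vdash l\to r$ be a standard nominal rule. Then $\mathcal{T}(\nabla,l)\Rightarrow\mathcal{T}(\nabla,r)$ is a CRS rule.
   Context: Nominal terms: $s,t ::= a \mid \pi\cdot X \mid [a]s \mid f\,s \mid (s_1,\ldots,s_n)$ over atoms, variables, function symbols with arities and finite-support permutations $\pi$ of atoms. A freshness context is a set of constraints $a\#X$. A nominal rule $\nabla\vdash l\to r$ has all variables of $r$ and $\nabla$ occurring in $l$. $\nabla\vdash t$ is closed if: (1) every atom occurrence $a$ in $t$ lies under an abstraction $[a]$; (2) if $\pi\cdot X$ is in the scope of an abstraction of $\pi(a)$ then every occurrence $\pi'\cdot X$ of $X$ in $t$ is in the scope of an abstraction of $\pi'(a)$, or $a\#X\in\nabla$; (3) for two occurrences $\pi_1\cdot X,\pi_2\cdot X$ and $a$ with $\pi_1(a)\neq\pi_2(a)$, if $a$ is not abstracted in one of the occurrences then $a\#X\in\nabla$. A rule is standard if $\nabla\vdash(l,r)$ is closed and $l$ has the form $f\,s$. CRS: meta-terms $a\mid Z(t_1,\dots,t_n)\mid[a]t\mid f\,t\mid(t_1,\dots,t_n)$ with meta-variables of fixed arity; a CRS rule is a pair $l\Rightarrow r$ of closed meta-terms (no free variables) with $l=f(s_1,\dots,s_n)$, all meta-variables of $r$ occurring in $l$, and meta-variables in $l$ occurring only in the form $Z(a_1,\dots,a_n)$ with $a_1,\dots,a_n$ pairwise distinct bound variables. Translation: $\Lambda_t(X)$ is the set of atoms $a$ such that some occurrence of $X$ in $t$ is in the scope of $[a]$.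 With a fixed total order on atoms, $\mathcal{T}(\nabla,t)$ is obtained from $t$ by replacing each occurrence $\pi\cdot X$ by $X(\pi\cdot xs)$, where $xs$ is the ascending list of $\{\pi^{-1}(a)\mid a\in\Lambda_t(X)\}\setminus\{a\mid a\#X\in\nabla\}$ and $\pi$ is applied elementwise; other constructs kept unchanged. In $\mathcal{T}(\nabla,l)$, $\Lambda_l$ is used, and in $\mathcal{T}(\nabla,r)$, $\Lambda_r$. *)

From mathcomp Require Import all_boot.
From Stdlib Require List.
Set Implicit Arguments. Unset Strict Implicit. Unset Printing Implicit Defensive.

(* Atoms, (nominal) variables, CRS meta-variables and function symbols are
   all represented by natural numbers; the total order on atoms is <= on nat. *)
Definition atom := nat.
Definition var := nat.
Definition fsym := nat.

(* Finite-support permutations: finite compositions of swappings.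
   The list [:: s1; ...; sn] denotes s1 o ... o sn. *)
Definition perm := seq (atom * atom).

Definition swap_at (s : atom * atom) (a : atom) : atom :=
  if a == s.1 then s.2 else if a == s.2 then s.1 else a.

Definition papply (p : perm) (a : atom) : atom := foldr swap_at a p.
Definition pinv (p : perm) : perm := rev p.

Inductive nterm :=
| NAtom of atom
| NSusp of perm & var
| NAbs of atom & nterm
| NApp of fsym & nterm
| NTup of seq nterm.

(* Freshness contexts: finite sets of constraints a # X, given as lists. *)
Definition fctx := seq (atom * var).

Fixpoint vocc (B : seq atom) (t : nterm) : seq (seq atom * perm * var) :=
  match t with
  | NAtom _ => [::]
  | NSusp p X => [:: (B, p, X)]
  | NAbs a s => vocc (a :: B) s
  | NApp _ s => vocc B s
  | NTup ts => flatten (map (vocc B) ts)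
  end.

Fixpoint aocc (B : seq atom) (t : nterm) : seq (seq atom * atom) :=
  match t with
  | NAtom a => [:: (B, a)]
  | NSusp _ _ => [::]
  | NAbs a s => aocc (a :: B) s
  | NApp _ s => aocc B s
  | NTup ts => flatten (map (aocc B) ts)
  end.

Definition nclosed (nab : fctx) (t : nterm) : Prop :=
  (forall B a, (B, a) \in aocc [::] t -> a \in B) /\
  (forall B p X a, (B, p, X) \in vocc [::] t -> papply p a \in B ->
     (forall B' p', (B', p', X) \in vocc [::] t -> papply p' a \in B')
     \/ (a, X) \in nab) /\
  (forall B1 p1 B2 p2 X a,
     (B1, p1, X) \in vocc [::] t -> (B2, p2, X) \in vocc [::] t ->
     papply p1 a != papply p2 a ->
     (papply p1 a \notin B1 \/ papply p2 a \notin B2) ->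
     (a, X) \in nab).

Definition nrule (nab : fctx) (l r : nterm) : Prop :=
  (forall B p X, (B, p, X) \in vocc [::] r ->
     exists B' p', (B', p', X) \in vocc [::] l) /\
  (forall a X, (a, X) \in nab -> exists B p, (B, p, X) \in vocc [::] l).

Definition standard_rule (nab : fctx) (l r : nterm) : Prop :=
  nrule nab l r /\ nclosed nab (NTup [:: l; r]) /\ exists f s, l = NApp f s.

Inductive mterm :=
| MAtom of atom
| MMeta of var & seq mterm
| MAbs of atom & mterm
| MApp of fsym & mterm
| MTup of seq mterm.

Fixpoint maocc (B : seq atom) (t : mterm) : seq (seq atom * atom) :=
  match t with
  | MAtom a => [:: (B, a)]
  | MMeta _ ts => flatten (map (maocc B) ts)
  | MAbs a s => maocc (a :: B) s
  | MApp _ s => maocc B s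
  | MTup ts => flatten (map (maocc B) ts)
  end.

Fixpoint mmocc (B : seq atom) (t : mterm) : seq (seq atom * var * seq mterm) :=
  match t with
  | MAtom _ => [::]
  | MMeta Z ts => (B, Z, ts) :: flatten (map (mmocc B) ts)
  | MAbs a s => mmocc (a :: B) s
  | MApp _ s => mmocc B s
  | MTup ts => flatten (map (mmocc B) ts)
  end.

Definition mclosed (t : mterm) : Prop :=
  forall B a, (B, a) \in maocc [::] t -> a \in B.

Definition crs_rule (l r : mterm) : Prop :=
  mclosed l /\ mclosed r /\
  (exists f s, l = MApp f s) /\
  (forall B Z ts, List.In (B, Z, ts) (mmocc [::] r) ->
     exists B' ts', List.In (B', Z, ts') (mmocc [::] l)) /\
  (forall B1 Z ts1 B2 ts2,
     List.In (B1, Z, ts1) (mmocc [::] l ++ mmocc [::] r) ->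
     List.In (B2, Z, ts2) (mmocc [::] l ++ mmocc [::] r) ->
     size ts1 = size ts2) /\
  (forall B Z ts, List.In (B, Z, ts) (mmocc [::] l) ->
     exists as_ : seq atom, ts = map MAtom as_ /\ uniq as_ /\ all (mem B) as_).

Definition Lambda (t : nterm) (X : var) : seq atom :=
  flatten [seq o.1.1 | o <- vocc [::] t & o.2 == X].

Definition trans_args (nab : fctx) (Lam : seq atom) (p : perm) (X : var)
  : seq atom :=
  sort leq (undup [seq b <- [seq papply (pinv p) a | a <- Lam]
                    | (b, X) \notin nab]).

Fixpoint trans_with (nab : fctx) (Lam : var -> seq atom) (t : nterm) : mterm :=
  match t with
  | NAtom a => MAtom a
  | NSusp p X =>
      MMeta X (map (fun b => MAtom (papply p b)) (trans_args nab (Lam X) p X))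
  | NAbs a s => MAbs a (trans_with nab Lam s)
  | NApp f s => MApp f (trans_with nab Lam s)
  | NTup ts => MTup (map (trans_with nab Lam) ts)
  end.

Definition Tr (nab : fctx) (t : nterm) : mterm := trans_with nab (Lambda t) t.

(** Closedness of [nab |- (l, r)] says that, for each variable X and each atom
    b not fresh for X, either every occurrence [p.X] has [p b] abstracted above
    it or none has.  Hence the argument list of [X] at an occurrence [(B, p)]
    consists exactly of the atoms [p b] with [p b] in [B] and [b # X] not in
    [nab]: all of them bound, pairwise distinct since [p] is injective, and as
    many at each occurrence of [X] in [l] or [r], since occurrences see the
    same set of such [b]. *)

From mathcomp Require Import all_boot.
From Stdlib Require List.
Set Implicit Arguments. Unset Strict Implicit.

Lemma swap_atK s : involutive (swap_at s).
Proof.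
case: s => x y a; rewrite /swap_at /=.
case: (eqVneq a x) => [->|hx]; first by rewrite eqxx; case: eqVneq => [->|].
case: (eqVneq a y) => [->|hy]; first by rewrite eqxx.
by rewrite (negbTE hx) (negbTE hy).
Qed.

Lemma papply_pinv_cons s p a :
  papply (pinv (s :: p)) a = papply (pinv p) (swap_at s a).
Proof. by rewrite /papply /pinv rev_cons foldr_rcons. Qed.

Lemma papplyK p : cancel (papply p) (papply (pinv p)).
Proof. by elim: p => [//|s p IH] a; rewrite papply_pinv_cons /= swap_atK IH. Qed.

Lemma papplyVK p : cancel (papply (pinv p)) (papply p).
Proof. by elim: p => [//|s p IH] a; rewrite papply_pinv_cons /= IH swap_atK. Qed.

Definition nterm_nested_ind (P : nterm -> Prop)
  (Ha : forall a, P (NAtom a)) (Hs : forall p X, P (NSusp p X))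
  (Hab : forall a s, P s -> P (NAbs a s)) (Hap : forall f s, P s -> P (NApp f s))
  (Ht : forall ts, (forall t, List.In t ts -> P t) -> P (NTup ts)) :
  forall t, P t :=
  fix F t := match t with
  | NAtom a => Ha a
  | NSusp p X => Hs p X
  | NAbs a s => Hab a s (F s)
  | NApp f s => Hap f s (F s)
  | NTup ts => Ht ts ((fix G (us : seq nterm) : forall t, List.In t us -> P t :=
       match us with
       | nil => fun t H => False_ind _ H
       | cons u us' => fun t H => match H with
           | or_introl e => eq_ind u P (F u) t e
           | or_intror H' => G us' t H' end end) ts)
  end.

Lemma flatten_map_InP (T : Type) (U : eqType) (f : T -> seq U) ts x :
  reflect (exists2 t, List.In t ts & x \in f t) (x \in flatten (map f ts)).
Proof.
elim: ts => [|t ts IH] /=; first by right=> -[].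
rewrite mem_cat; apply: (iffP orP) => [[Hx|/IH[u Hu Hx]]|[u [<-|Hu] Hx]].
- by exists t; [left|].
- by exists u; [right|].
- by left.
- by right; apply/IH; exists u.
Qed.

Lemma In_flatten_map (T U : Type) (f : T -> seq U) ts x :
  List.In x (flatten (map f ts)) <-> exists2 t, List.In t ts & List.In x (f t).
Proof.
elim: ts => [|t ts IH] /=; first by split=> // -[].
rewrite List.in_app_iff IH.
split=> [[Hx|[u Hu Hx]]|[u [<-|Hu] Hx]]; by [exists t; [left|] | exists u; [right|]
  | left | right; exists u].
Qed.

Lemma maocc_atoms B (s : seq atom) :
  flatten (map (maocc B) (map MAtom s)) = [seq (B, a) | a <- s].
Proof. by elim: s => //= a s ->. Qed.

Lemma mmocc_atoms B (s : seq atom) : flatten (map (mmocc B) (map MAtom s)) = [::].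
Proof. by elim: s. Qed.

Definition susp_atoms (nab : fctx) (Lam : var -> seq atom) (p : perm) (X : var)
  : seq atom := map (papply p) (trans_args nab (Lam X) p X).

Section Translation.
Variables (nab : fctx) (Lam : var -> seq atom).

Lemma trans_with_susp p X :
  trans_with nab Lam (NSusp p X) = MMeta X (map MAtom (susp_atoms nab Lam p X)).
Proof. by rewrite /= /susp_atoms -map_comp. Qed.

Lemma maocc_trans_with t B B' a :
  (B', a) \in maocc B (trans_with nab Lam t) ->
  (B', a) \in aocc B t \/
  exists p X, (B', p, X) \in vocc B t /\ a \in susp_atoms nab Lam p X.
Proof.
elim/nterm_nested_ind: t B => [c|p X|c s IH|f s IH|us IH] B.
- by left.
- rewrite trans_with_susp /= maocc_atoms => /mapP [b Hb [-> ->]].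
  by right; exists p, X; rewrite mem_seq1 eqxx.
- exact: IH.
- exact: IH.
- rewrite /= -map_comp => /flatten_map_InP [t tus /(IH t tus)].
  case=> [Ha|[p [X [Ho Ha]]]]; [left|right; exists p, X; split=> //];
    by apply/flatten_map_InP; exists t.
Qed.

Lemma mmocc_trans_with t B B' Z ts :
  List.In (B', Z, ts) (mmocc B (trans_with nab Lam t)) <->
  exists2 p, (B', p, Z) \in vocc B t & ts = map MAtom (susp_atoms nab Lam p Z).
Proof.
elim/nterm_nested_ind: t B => [c|p X|c s IH|f s IH|us IH] B.
- by split=> // -[].
- rewrite trans_with_susp /= mmocc_atoms.
  split=> [[[<- <- <-]|//]|[q]]; first by exists p; rewrite ?mem_seq1.
  by rewrite mem_seq1 => /eqP [-> -> ->] ->; left.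
- exact: IH.
- exact: IH.
- rewrite /= -map_comp.
  split=> [/In_flatten_map [t tus /(IH t tus B) [p Ho ts_eq]]|
           [p /flatten_map_InP [t tus Ho] ts_eq]].
  + by exists p => //; apply/flatten_map_InP; exists t.
  + by apply/In_flatten_map; exists t => //; apply/(IH t tus B); exists p.
Qed.

End Translation.

Lemma LambdaP t X a :
  reflect (exists B p, (B, p, X) \in vocc [::] t /\ a \in B) (a \in Lambda t X).
Proof.
apply: (iffP flattenP) => [[_ /mapP [[[B p] Y] Ho ->] Ha]|[B [p [Ho Ha]]]].
- by move: Ho; rewrite mem_filter /= => /andP [/eqP -> Ho]; exists B, p.
- by exists B => //; apply/mapP; exists (B, p, X); rewrite ?mem_filter ?eqxx.
Qed.

Lemma mem_trans_args nab Lam p X b :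
  (b \in trans_args nab Lam p X) = ((b, X) \notin nab) && (papply p b \in Lam).
Proof.
rewrite /trans_args mem_sort mem_undup mem_filter; congr (_ && _).
apply/mapP/idP => [[a Ha ->]|Hb]; first by rewrite papplyVK.
by exists (papply p b); rewrite ?papplyK.
Qed.

Lemma trans_args_uniq nab Lam p X : uniq (trans_args nab Lam p X).
Proof. by rewrite sort_uniq undup_uniq. Qed.

Section ClosedTerm.
Variables (nab : fctx) (u : nterm).
Hypothesis u_closed : nclosed nab u.

Lemma abstracted_at_every_occ B1 p1 B2 p2 X b :
  (B1, p1, X) \in vocc [::] u -> (B2, p2, X) \in vocc [::] u ->
  (b, X) \notin nab -> papply p1 b \in B1 -> papply p2 b \in B2.
Proof.
case: u_closed => _ [abs_all _] Ho1 Ho2 Hn Hb.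
by case: (abs_all _ _ _ _ Ho1 Hb) => [->//|Hc]; rewrite Hc in Hn.
Qed.

Lemma abstracted_at_occ B p X B' p' b :
  (B, p, X) \in vocc [::] u -> (B', p', X) \in vocc [::] u ->
  (b, X) \notin nab -> papply p b \in B' -> papply p b \in B.
Proof.
move=> Ho Ho' Hn Hb; apply/idPn => Hb'.
case: (eqVneq (papply p' b) (papply p b)) => [E|E].
- by move: Hb'; rewrite (abstracted_at_every_occ Ho' Ho Hn) // E.
- case: u_closed => _ [_ abs_same].
  have := abs_same _ _ _ _ _ b Ho Ho'; rewrite eq_sym E (negbTE Hn).
  by move=> /(_ isT (or_introl Hb')).
Qed.

Lemma mem_trans_args_occ t B p X b :
  {subset vocc [::] t <= vocc [::] u} -> (B, p, X) \in vocc [::] t ->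
  (b \in trans_args nab (Lambda t X) p X) = ((b, X) \notin nab) && (papply p b \in B).
Proof.
move=> sub Ho; rewrite mem_trans_args.
apply/andP/andP => -[Hn Hb]; split=> //.
- case/LambdaP: Hb => B' [p' [Ho' Hb]].
  exact: abstracted_at_occ (sub _ Ho) (sub _ Ho') Hn Hb.
- by apply/LambdaP; exists B, p.
Qed.

Lemma susp_atoms_abstracted t B p X :
  {subset vocc [::] t <= vocc [::] u} -> (B, p, X) \in vocc [::] t ->
  {subset susp_atoms nab (Lambda t) p X <= B}.
Proof.
move=> sub Ho _ /mapP [b Hb ->].
by move: Hb; rewrite (mem_trans_args_occ b sub Ho) => /andP [].
Qed.

Lemma size_trans_args_occ t1 t2 B1 p1 B2 p2 X :
  {subset vocc [::] t1 <= vocc [::] u} -> {subset vocc [::] t2 <= vocc [::] u} ->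
  (B1, p1, X) \in vocc [::] t1 -> (B2, p2, X) \in vocc [::] t2 ->
  size (trans_args nab (Lambda t1 X) p1 X) = size (trans_args nab (Lambda t2 X) p2 X).
Proof.
move=> sub1 sub2 Ho1 Ho2; apply/perm_size/uniq_perm; rewrite ?trans_args_uniq // => b.
rewrite (mem_trans_args_occ b sub1 Ho1) (mem_trans_args_occ b sub2 Ho2).
apply/andP/andP => -[Hn Hb]; split=> //.
- exact: abstracted_at_every_occ (sub1 _ Ho1) (sub2 _ Ho2) Hn Hb.
- exact: abstracted_at_every_occ (sub2 _ Ho2) (sub1 _ Ho1) Hn Hb.
Qed.

Lemma Tr_mclosed t :
  (forall B a, (B, a) \in aocc [::] t -> a \in B) ->
  {subset vocc [::] t <= vocc [::] u} -> mclosed (Tr nab t).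
Proof.
move=> atoms_bound sub B a /maocc_trans_with [/atoms_bound //|[p [X [Ho Ha]]]].
exact: susp_atoms_abstracted Ho _ Ha.
Qed.

End ClosedTerm.

Theorem mainTheorem8 (nab : fctx) (l r : nterm) :
  standard_rule nab l r -> crs_rule (Tr nab l) (Tr nab r).
Proof.
move=> [[r_vars _] [lr_closed [f [s l_app]]]].
set u := NTup [:: l; r].
have sub_l : {subset vocc [::] l <= vocc [::] u}.
  by move=> o; rewrite /= cats0 mem_cat => ->.
have sub_r : {subset vocc [::] r <= vocc [::] u}.
  by move=> o; rewrite /= cats0 mem_cat => ->; rewrite orbT.
have [atoms_bound _] := lr_closed.
split; [|split; [|split; [|split; [|split]]]].
- apply: (Tr_mclosed lr_closed _ sub_l) => B a Ha.
  by apply: atoms_bound; rewrite /= cats0 mem_cat Ha.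
- apply: (Tr_mclosed lr_closed _ sub_r) => B a Ha.
  by apply: atoms_bound; rewrite /= cats0 mem_cat Ha orbT.
- by rewrite /Tr l_app; exists f, (trans_with nab (Lambda (NApp f s)) s).
- move=> B Z ts /mmocc_trans_with [p /r_vars [B' [p' Ho']] _].
  exists B', (map MAtom (susp_atoms nab (Lambda l) p' Z)).
  by apply/mmocc_trans_with; exists p'.
- move=> B1 Z ts1 B2 ts2.
  have meta_occ B ts : List.In (B, Z, ts) (mmocc [::] (Tr nab l) ++ mmocc [::] (Tr nab r)) ->
      exists t p, [/\ {subset vocc [::] t <= vocc [::] u}, (B, p, Z) \in vocc [::] t
                    & ts = map MAtom (susp_atoms nab (Lambda t) p Z)].
    by case/List.in_app_iff => /mmocc_trans_with [p Ho ->]; [exists l | exists r]; exists p.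
  move=> /meta_occ [t1 [p1 [sub1 Ho1 ->]]] /meta_occ [t2 [p2 [sub2 Ho2 ->]]].
  by rewrite !size_map (size_trans_args_occ lr_closed sub1 sub2 Ho1 Ho2).
- move=> B Z ts /mmocc_trans_with [p Ho ->].
  exists (susp_atoms nab (Lambda l) p Z); split=> //; split.
  + by rewrite map_inj_uniq ?trans_args_uniq //; apply: can_inj (papplyK p).
  + exact/allP/(susp_atoms_abstracted lr_closed sub_l Ho).
Qed.
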